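(* Let $x\in S_n$ with $x_i>x_{i+1}$, and let $y$ be obtained from $x$ by transposing $x_i$ and $x_{i+1}$, so that $x$ covers $y$ in the weak order. Then a lattice congruence $\Theta$ on $S_n$ contracts the edge $y\lessdot x$ (i.e. $x\equiv y$) if and only if it contracts the join-irreducible $\lambda(x,i)$.
   Context: $S_n$: permutations of $[n]$ in one-line notation with the right weak order ($x\le y$ iff the set of inverted value pairs of $x$ is contained in that of $y$), a lattice. A join-irreducible $\gamma$ covers exactly one element $\gamma_*$; $\Theta$ contracts $\gamma$ if $\gamma\equiv\gamma_*$. For $x$ with $x_i>x_{i+1}$, set $A(x,i)=\{x_j:1\le j\le i,\ x_j>x_i\}\cup\{x_j:i+1\le j\le n,\ x_j\ge x_{i+1}\}$, and let $\lambda(x,i)$ be the permutation consisting of the elements of $[n]\setminus A(x,i)$ in increasing order followed by the elements of $A(x,i)$ in increasing order; it is join-irreducible. *)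

(* Permutations of [n] are {perm 'I_n}, values and positions
   0-indexed; one-line notation of x is (x 0, x 1, ..., x (n-1)). *)
From mathcomp Require Import all_boot all_order all_fingroup.
Set Implicit Arguments. Unset Strict Implicit. Unset Printing Implicit Defensive.
Local Open Scope group_scope.

Section WeakOrder.
Variable n : nat.
Notation Sn := {perm 'I_n}.

Definition inv_set (x : Sn) : {set 'I_n * 'I_n} :=
  [set p : 'I_n * 'I_n | (p.1 < p.2)%N && (x^-1 p.2 < x^-1 p.1)%N].

(* right weak order *)
Definition wle (x y : Sn) : Prop := inv_set x \subset inv_set y.
Definition wlt (x y : Sn) : Prop := wle x y /\ x <> y.

Definition covers (x y : Sn) : Prop :=
  wlt y x /\ ~ (exists z, wlt y z /\ wlt z x).

Definition is_join (a b c : Sn) : Prop :=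
  wle a c /\ wle b c /\ forall d, wle a d -> wle b d -> wle c d.
Definition is_meet (a b c : Sn) : Prop :=
  wle c a /\ wle c b /\ forall d, wle d a -> wle d b -> wle d c.

Definition lattice_congruence (Th : Sn -> Sn -> Prop) : Prop :=
  [/\ (forall a, Th a a), (forall a b, Th a b -> Th b a),
      (forall a b c, Th a b -> Th b c -> Th a c),
      (forall a b c ja jb, Th a b -> is_join a c ja -> is_join b c jb -> Th ja jb)
    & (forall a b c ma mb, Th a b -> is_meet a c ma -> is_meet b c mb -> Th ma mb)].

(* Theta contracts the join-irreducible gamma: gamma == gamma_* , where
   gamma_* is the (unique) element covered by gamma *)
Definition contracts (Th : Sn -> Sn -> Prop) (g : Sn) : Prop :=
  exists g', covers g g' /\ Th g g'.

(* A(x,i); here i is a position and j the next position (j = i+1) *)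
Definition Aset (x : Sn) (i j : 'I_n) : {set 'I_n} :=
  x @: [set k : 'I_n | ((k <= i)%N && (x i < x k)%N) || ((j <= k)%N && (x j <= x k)%N)].

(* one-line notation of lambda(x,i): complement of A increasing, then A increasing *)
Definition lam_seq (x : Sn) (i j : 'I_n) : seq 'I_n :=
  [seq v <- enum 'I_n | v \notin Aset x i j] ++ [seq v <- enum 'I_n | v \in Aset x i j].

Definition lam_fun (x : Sn) (i j : 'I_n) (p : 'I_n) : 'I_n := nth p (lam_seq x i j) p.

Lemma lam_seq_perm x i j : perm_eq (lam_seq x i j) (enum 'I_n).
Proof. by rewrite /lam_seq perm_catC perm_filterC. Qed.

Lemma lam_fun_inj x i j : injective (lam_fun x i j).
Proof.
move=> p q; rewrite /lam_fun.
have hs : size (lam_seq x i j) = n by rewrite (perm_size (lam_seq_perm x i j)) size_enum_ord.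
have hu : uniq (lam_seq x i j) by rewrite (perm_uniq (lam_seq_perm x i j)) enum_uniq.
rewrite (set_nth_default p q); last by rewrite hs ltn_ord.
move/eqP; rewrite nth_uniq ?hs ?ltn_ord //; move/eqP; exact: val_inj.
Qed.

Definition lambda (x : Sn) (i j : 'I_n) : Sn := perm (@lam_fun_inj x i j).

End WeakOrder.

From mathcomp Require Import all_boot all_order all_fingroup zify.

(* Let P be the inversion (x_{i+1}, x_i), so that inv(y) = inv(x) \ {P}.  The
   inversion set of lambda = lambda(x,i) is the set of pairs a < b with a in A
   and b not in A; it contains P and lies inside inv(x).  Since x_i is the
   largest value outside A and x_{i+1} the smallest one in A, they sit next to
   each other in lambda, and swapping them gives lambda_0 with inversion set
   inv(lambda) \ {P}.  The same extremality shows that the only u <= lambda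
   having the inversion P is lambda itself, so lambda_0 is the unique element
   covered by lambda.  Finally lambda /\ y = lambda_0 and lambda \/ y = x, hence
   the edges y < x and lambda_0 < lambda are perspective and every lattice
   congruence contracts both or neither. *)

Set Implicit Arguments. Unset Strict Implicit. Unset Printing Implicit Defensive.
Local Open Scope group_scope.

Section InversionSets.
Variable n : nat.
Implicit Types (x y z : {perm 'I_n}) (i j u v : 'I_n).

Lemma inv_setP x a b : ((a, b) \in inv_set x) = (a < b) && (x^-1 b < x^-1 a).
Proof. by rewrite inE. Qed.

Lemma card_ltn_ord k : k <= n -> #|[set m : 'I_n | m < k]| = k.
Proof.
move=> kn; rewrite cardsE cardE /enum_mem size_filter -enumT.
rewrite -(count_map val (fun m => m < 0 + k)) val_enum_ord -size_filter.
by rewrite filter_iota_ltn // size_iota.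
Qed.

Lemma perm_rank x v : val (x v) = #|[set u | x u < x v]|.
Proof.
rewrite -[LHS](card_ltn_ord (ltnW (ltn_ord (x v)))).
rewrite -(card_preimset [set m : 'I_n | m < x v] (@perm_inj _ x)).
by apply: eq_card => u; rewrite !inE.
Qed.

Lemma ltn_permV_inv_set x u v : (x^-1 u < x^-1 v) =
  if u < v then (u, v) \notin inv_set x else (v, u) \in inv_set x.
Proof.
rewrite !inv_setP; case: (ltngtP u v) => [uv|vu|/val_inj->]; rewrite ?ltnn //=.
rewrite -leqNgt ltn_neqAle (inj_eq (@ord_inj n)) (inj_eq perm_inj) andb_idl // => _.
by apply: contraTneq uv => ->; rewrite ltnn.
Qed.

Lemma inv_set_inj : injective (@inv_set n).
Proof.
move=> x y exy; apply: invg_inj; apply/permP => v; apply: val_inj.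
rewrite (perm_rank x^-1) (perm_rank y^-1).
by apply: eq_card => u; rewrite !inE !ltn_permV_inv_set exy.
Qed.

Lemma ltn_tperm_adj i j u v : j = i.+1 :> nat ->
  (u, v) != (i, j) -> (u, v) != (j, i) -> (tperm i j u < tperm i j v) = (u < v).
Proof.
have nat_neq (a b : 'I_n) : a <> b -> a <> b :> nat by move=> ab /ord_inj.
move=> hj; case: tpermP => [->|->|/nat_neq ui /nat_neq uj];
  case: tpermP => [->|->|/nat_neq vi /nat_neq vj]; rewrite ?eqxx //= => _ _; lia.
Qed.

Lemma inv_set_tpermM z i j : j = i.+1 :> nat -> z j < z i ->
  inv_set (tperm i j * z) = inv_set z :\ (z j, z i).
Proof.
move=> hj hd; apply/setP => -[a b]; rewrite in_setD1 !inv_setP invMg tpermV !permM.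
rewrite xpair_eqE -[a](permKV z) -[b](permKV z) !permK !(inj_eq perm_inj).
move: (z^-1 a) (z^-1 b) => {}a {}b.
case: (boolP [&& a == j & b == i]) => [/andP[/eqP-> /eqP->] | nji].
  by rewrite tpermL tpermR hj [_.+1 < _]ltnNge leqnSn andbF.
case: (boolP [&& a == i & b == j]) => [/andP[/eqP-> /eqP->] | nij].
  by rewrite ltnNge (ltnW hd) !andbF.
by rewrite ltn_tperm_adj ?nji // xpair_eqE andbC.
Qed.

End InversionSets.

Section WeakOrder.
Variable n : nat.
Implicit Types (a b c d u w z : {perm 'I_n}) (p : 'I_n * 'I_n).

Lemma is_meet_inv_setI a b c : inv_set c = inv_set a :&: inv_set b -> is_meet a b c.
Proof.
rewrite /is_meet /wle => ->; split; [exact: subsetIl | split; first exact: subsetIr].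
by move=> d da db; rewrite subsetI da.
Qed.

Lemma is_join_inv_setU a b c : inv_set c = inv_set a :|: inv_set b -> is_join a b c.
Proof.
rewrite /is_join /wle => ->; split; [exact: subsetUl | split; first exact: subsetUr].
by move=> d ad bd; rewrite subUset ad.
Qed.

Lemma covers_inv_setD1 w z p : p \in inv_set w -> inv_set z = inv_set w :\ p -> covers w z.
Proof.
move=> pw ez; split.
  split; first by rewrite /wle ez subD1set.
  by move=> ezw; move: pw; rewrite -ezw ez setD11.
case=> u [[zu nzu] [uw nuw]]; case: (boolP (p \in inv_set u)) => pu.
  apply: nuw; apply: inv_set_inj; apply/eqP; rewrite eqEsubset uw /=.
  apply/subsetP => q qw; case: (q =P p) => [-> // | /eqP nqp].
  by apply: (subsetP zu); rewrite ez in_setD1 nqp qw.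
apply: nzu; apply: inv_set_inj; apply/eqP; rewrite eqEsubset zu /= ez.
apply/subsetP => q qu; rewrite in_setD1 (subsetP uw _ qu) andbT.
by apply: contraNneq pu => <-.
Qed.

Lemma contracts_inv_setD1 Th w z p : p \in inv_set w -> inv_set z = inv_set w :\ p ->
  (forall u, wle u w -> p \in inv_set u -> u = w) -> contracts Th w <-> Th w z.
Proof.
move=> pw ez w_min; have cov_wz := covers_inv_setD1 pw ez.
split=> [[z' [[[z'w nz'w] no_between] Twz']] | Twz]; last by exists z.
have z'z : wle z' z.
  by rewrite /wle ez subsetD1 z'w; apply/negP => /(w_min _ z'w).
case: (z' =P z) => [<- // | nz'z]; case: no_between; exists z.
by split; [split | case: cov_wz].
Qed.

Lemma lattice_congruence_perspective Th a b c d : lattice_congruence Th ->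
  is_meet a c c -> is_meet b c d -> is_join c b a -> is_join d b b ->
  Th a b <-> Th c d.
Proof.
case=> _ _ _ join_compat meet_compat mac mbd jca jdb; split=> [Tab | Tcd].
  exact: meet_compat Tab mac mbd.
exact: join_compat Tcd jca jdb.
Qed.

Lemma lattice_congruence_inv_setD1 Th a b c d p : lattice_congruence Th ->
  p \in inv_set c -> wle c a ->
  inv_set b = inv_set a :\ p -> inv_set d = inv_set c :\ p ->
  Th a b <-> Th c d.
Proof.
move=> congTh pc ca eb ed; apply: lattice_congruence_perspective => //.
- by apply/is_meet_inv_setI/esym/setIidPr.
- by apply: is_meet_inv_setI; rewrite eb ed setIDAC (setIidPr ca).
- apply: is_join_inv_setU; rewrite eb; apply/setP => q; rewrite in_setU in_setD1.
  case: (q =P p) => [-> | _] /=; first by rewrite pc (subsetP ca).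
  by case: (boolP (q \in inv_set c)) => // /(subsetP ca).
- by apply/is_join_inv_setU/esym/setUidPr; rewrite eb ed setSD.
Qed.

End WeakOrder.

Lemma index_filter_enum_ord n (P : pred 'I_n) a b : P a -> P b ->
  (index a [seq u <- enum 'I_n | P u] < index b [seq u <- enum 'I_n | P u]) = (a < b).
Proof.
move=> Pa Pb; set s := [seq u <- enum 'I_n | P u].
have mem_s u : (u \in s) = P u by rewrite mem_filter mem_enum andbT.
have lt_tr : transitive (fun u v : 'I_n => u < v) by move=> ? ? ?; apply: ltn_trans.
have le_tr : transitive (fun u v : 'I_n => u <= v) by move=> ? ? ?; apply: leq_trans.
have lt_s : sorted (fun u v : 'I_n => u < v) s.
  apply: sorted_filter => //.
  by have := iota_ltn_sorted 0 n; rewrite -val_enum_ord sorted_map.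
have le_s : sorted (fun u v : 'I_n => u <= v) s by apply: sub_sorted lt_s => u v /ltnW.
apply/idP/idP => [|ab]; first by apply: (sorted_ltn_index lt_tr lt_s); rewrite mem_s.
rewrite ltnNge; apply: contraL ab.
move=> /(sorted_leq_index le_tr (fun u => leqnn u) le_s); rewrite !mem_s => /(_ Pb Pa).
by rewrite -leqNgt.
Qed.

Section Lambda.
Variables (n : nat) (x : {perm 'I_n}) (i j : 'I_n).
Local Notation A := (Aset x i j).
Local Notation lam := (lambda x i j).

Lemma lambdaV_index v : val (lam^-1 v) = index v (lam_seq x i j).
Proof.
have size_lam : size (lam_seq x i j) = n.
  by rewrite (perm_size (lam_seq_perm x i j)) size_enum_ord.
have v_lam : v \in lam_seq x i j by rewrite (perm_mem (lam_seq_perm x i j)) mem_enum.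
have hk : index v (lam_seq x i j) < n by rewrite -[X in _ < X]size_lam index_mem.
have lam_k : lam (Ordinal hk) = v by rewrite /lambda permE /lam_fun /= nth_index.
by rewrite -{1}lam_k permK.
Qed.

Lemma lambdaV_lt a b : (lam^-1 a < lam^-1 b) =
  if a \in A then (b \in A) && (a < b) else (b \in A) || (a < b).
Proof.
have mem_f (P : pred 'I_n) v : (v \in [seq u <- enum 'I_n | P u]) = P v.
  by rewrite mem_filter mem_enum andbT.
have index_lt (P : pred 'I_n) v :
    P v -> index v [seq u <- enum 'I_n | P u] < size [seq u <- enum 'I_n | P u].
  by move=> Pv; rewrite index_mem mem_f.
rewrite !lambdaV_index /lam_seq !index_cat !mem_f.
case: (boolP (a \in A)) => aA; case: (boolP (b \in A)) => bA /=.
- by rewrite ltn_add2l index_filter_enum_ord.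
- by apply/negbTE; rewrite -leqNgt ltnW // ltn_addr // index_lt.
- by rewrite ltn_addr // index_lt.
- by rewrite index_filter_enum_ord.
Qed.

Lemma inv_set_lambda a b :
  ((a, b) \in inv_set lam) = [&& a < b, a \in A & b \notin A].
Proof.
rewrite inv_setP lambdaV_lt.
by case: (a \in A); case: (b \in A); rewrite /= ?andbT ?andbF //; case: ltngtP.
Qed.

Variables c a : 'I_n.
Hypotheses (cA : c \in A) (aA : a \notin A).
Hypotheses (A_ge : forall d, d \in A -> c <= d) (compl_le : forall b, b \notin A -> b <= a).

Lemma lambdaV_adjacent : lam^-1 c = (lam^-1 a).+1 :> nat.
Proof.
have ac : lam^-1 a < lam^-1 c by rewrite lambdaV_lt (negbTE aA) cA.
apply/eqP; rewrite eqn_leq ac andbT leqNgt; apply/negP => gap.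
have hk : (lam^-1 a).+1 < n := ltn_trans gap (ltn_ord _).
set k := Ordinal hk.
case: (boolP (lam k \in A)) => kA.
  have := lambdaV_lt (lam k) c; rewrite permK kA cA /= gap => /esym.
  by rewrite ltnNge A_ge.
have := lambdaV_lt a (lam k); rewrite permK (negbTE aA) (negbTE kA) /= ltnSn => /esym.
by rewrite ltnNge compl_le.
Qed.

Lemma inv_set_lambda_min u : wle u lam -> (c, a) \in inv_set u -> u = lam.
Proof.
move=> ul cau; apply: inv_set_inj; apply/eqP; rewrite eqEsubset ul /=.
have le_of_notin (d b : 'I_n) : d < b -> (d, b) \notin inv_set lam -> u^-1 d <= u^-1 b.
  move=> db /negP dbl; rewrite leqNgt; apply/negP => bd.
  by apply: dbl; apply: (subsetP ul); rewrite inv_setP db.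
apply/subsetP => -[d b]; rewrite inv_set_lambda inv_setP => /and3P[db dA bA].
rewrite db /=.
have ba : u^-1 b <= u^-1 a.
  case: (b =P a) => [-> // | /eqP nba]; apply: le_of_notin.
    by rewrite ltn_neqAle (inj_eq (@ord_inj n)) nba compl_le.
  by rewrite inv_set_lambda (negbTE bA) /= andbF.
have cd : u^-1 c <= u^-1 d.
  case: (c =P d) => [-> // | /eqP ncd]; apply: le_of_notin.
    by rewrite ltn_neqAle (inj_eq (@ord_inj n)) ncd A_ge.
  by rewrite inv_set_lambda dA /= !andbF.
move: cau; rewrite inv_setP => /andP[_ ac]; exact: leq_ltn_trans ba (leq_trans ac cd).
Qed.

End Lambda.

Section AsetDescent.
Variables (n : nat) (x : {perm 'I_n}) (i j : 'I_n).
Local Notation A := (Aset x i j).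

Lemma mem_Aset v :
  (v \in A) = (x^-1 v <= i) && (x i < v) || (j <= x^-1 v) && (x j <= v).
Proof. by rewrite -{1}(permKV x v) mem_imset ?inE ?permKV //; apply: perm_inj. Qed.

Lemma Aset_next_in : x j \in A.
Proof. by rewrite mem_Aset permK !leqnn orbT. Qed.

Lemma Aset_desc_notin : i < j -> x i \notin A.
Proof. rewrite mem_Aset permK; lia. Qed.

Lemma Aset_ge v : x j < x i -> v \in A -> x j <= v.
Proof. rewrite mem_Aset; lia. Qed.

Lemma Aset_compl_le v : j = i.+1 :> nat -> x j < x i -> v \notin A -> v <= x i.
Proof. rewrite mem_Aset; lia. Qed.

Lemma lambda_wle : j = i.+1 :> nat -> x j < x i -> wle (lambda x i j) x.
Proof.
by move=> hj hdesc; apply/subsetP => -[a b]; rewrite inv_set_lambda inv_setP !mem_Aset; lia.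
Qed.

End AsetDescent.

Theorem proposition6p4 (n : nat) (x y : {perm 'I_n}) (i j : 'I_n)
  (hj : nat_of_ord j = (nat_of_ord i).+1)
  (hdesc : (x j < x i)%N)
  (hy : forall k : 'I_n, y k = x (tperm i j k))
  (Th : {perm 'I_n} -> {perm 'I_n} -> Prop)
  (hTh : lattice_congruence Th) :
  Th x y <-> contracts Th (lambda x i j).
Proof.
set lam := lambda x i j; set P := (x j, x i).
have cA := Aset_next_in x i j.
have aA : x i \notin Aset x i j by apply: Aset_desc_notin; rewrite hj.
have A_ge d := @Aset_ge _ x i j d hdesc.
have compl_le b := @Aset_compl_le _ x i j b hj hdesc.
have P_lam : P \in inv_set lam by rewrite inv_set_lambda cA aA hdesc.
have inv_y : inv_set y = inv_set x :\ P.
  have -> : y = tperm i j * x by apply/permP => k; rewrite permM hy.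
  exact: inv_set_tpermM.
pose lam0 := tperm (lam^-1 (x i)) (lam^-1 (x j)) * lam.
have inv_lam0 : inv_set lam0 = inv_set lam :\ P.
  by rewrite inv_set_tpermM ?permKV // (lambdaV_adjacent cA aA A_ge compl_le).
rewrite (contracts_inv_setD1 Th P_lam inv_lam0 (inv_set_lambda_min A_ge compl_le)).
exact: lattice_congruence_inv_setD1 hTh P_lam (lambda_wle hj hdesc) inv_y inv_lam0.
Qed.
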